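(* Let $I=\bigcup_{n\in\mathbb N}I_n$ be a partition of a countable set $I$ into nonempty finite pieces and let $\mathcal F$ be a $T$-family on $I$ with respect to this partition. Then for every $0<\lambda<1$ and every finitely supported sequence of scalars $(a_n)_n$, $$\lambda\Big\|\sum_n a_nu_n\Big\|_{\mathcal G_\lambda(\mathcal F)}\le\max\Big\{\Big\|\sum_n a_n\Big(\frac1{\#I_n}\sum_{j\in I_n}u_j\Big)\Big\|_{\mathcal F},\ \sup_n|a_n|\Big\}\le\Big\|\sum_na_nu_n\Big\|_{\mathcal G_+(\mathcal F)},$$ where on the left and right $(u_n)_{n\in\mathbb N}$ is the unit basis of $c_{00}(\mathbb N)$ and in the middle $(u_j)_{j\in I}$ is the unit basis of $c_{00}(I)$.
   Context: A family on a set $J$ is a collection of finite subsets of $J$. For a family $\mathcal H$ on $J$, $\|x\|_{\mathcal H}=\max\{\|x\|_\infty,\sup_{s\in\mathcal H}\sum_{j\in s}|(x)_j|\}$ for $x\in c_{00}(J)$. A family $\mathcal H$ is $n$-large in $J$ if for every infinite $K\subseteq J$ there is $s\in\mathcal H$ with $\#(s\cap K)\ge n$, and large in $J$ if it is $n$-large for every $n$; it is pre-compact if every set in its closure in $2^J$ (product topology) is finite. For $s\subseteq I$ finite and $0<\lambda<1$: $s[\lambda]=\{n: \#(s\cap I_n)\ge\lambda\#I_n\}$, $s[+]=\{n: s\cap I_n\neq\emptyset\}$, $\mathcal G_\lambda(\mathcal F)=\{s[\lambda]:s\in\mathcal F\}$, $\mathcal G_+(\mathcal F)=\{s[+]:s\in\mathcal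 F\}$ (families on $\mathbb N$). A pre-compact family $\mathcal F$ on $I$ is a $T$-family (w.r.t. $(I_n)_n$) if $\mathcal F$ is not large in any infinite $J\subseteq I$ and there is $0<\lambda\le1$ such that $\mathcal G_\lambda(\mathcal F)$ is large in $\mathbb N$. *)

From HB Require Import structures.
From mathcomp Require Import all_boot all_order all_algebra.
From mathcomp Require Import all_classical all_reals all_analysis.
From mathcomp Require Import finmap.
Set Implicit Arguments. Unset Strict Implicit. Unset Printing Implicit Defensive.
Import Order.TTheory GRing.Theory Num.Theory.
Local Open Scope classical_set_scope.
Local Open Scope ring_scope.

Definition is_family {J : Type} (H : set (set J)) : Prop :=
  forall s, H s -> finite_set s.

Definition ncard {J : choiceType} (A : set J) : nat := #|` fset_set A|%fset.

Definition fam_norm {R : realType} {J : choiceType} (H : set (set J))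
    (x : J -> R) : \bar R :=
  maxe (ereal_sup (range (fun j => (`|x j|)%:E)))
       (ereal_sup [set (\sum_(j \in s) `|x j|)%:E | s in H]).

Definition n_large {I : choiceType} (n : nat) (H : set (set I)) (J : set I) : Prop :=
  forall K : set I, K `<=` J -> infinite_set K ->
    exists2 s, H s & (n <= ncard (s `&` K))%N.

Definition large {I : choiceType} (H : set (set I)) (J : set I) : Prop :=
  forall n, n_large n H J.

Definition indicator {J : Type} (s : set J) : {ptws J -> bool} :=
  fun j => `[< s j >].

(* pre-compact: every set in the closure of H in 2^J (product topology)
   is finite *)
Definition precompact {J : Type} (H : set (set J)) : Prop :=
  forall A : {ptws J -> bool}, closure (indicator @` H) A ->
    finite_set [set j | A j].

Definition s_lambda {R : realType} {I : choiceType} (Ip : nat -> set I)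
    (lam : R) (s : set I) : set nat :=
  [set n | lam * (ncard (Ip n))%:R <= (ncard (s `&` Ip n))%:R].

Definition s_plus {I : Type} (Ip : nat -> set I) (s : set I) : set nat :=
  [set n | s `&` Ip n !=set0].

Definition G_lambda {R : realType} {I : choiceType} (Ip : nat -> set I)
    (lam : R) (F : set (set I)) : set (set nat) :=
  s_lambda Ip lam @` F.

Definition G_plus {I : Type} (Ip : nat -> set I) (F : set (set I)) :
    set (set nat) :=
  s_plus Ip @` F.

Definition T_family (R : realType) {I : choiceType} (Ip : nat -> set I)
    (F : set (set I)) : Prop :=
  [/\ is_family F, precompact F,
      (forall J : set I, infinite_set J -> ~ large F J) &
      exists lam : R, 0 < lam <= 1 /\ large (G_lambda Ip lam F) [set: nat]].

Definition finite_partition {I : Type} (Ip : nat -> set I) : Prop :=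
  [/\ forall n, finite_set (Ip n),
      forall n, Ip n !=set0,
      trivIset [set: nat] Ip &
      \bigcup_n Ip n = [set: I]].

From HB Require Import structures.
From mathcomp Require Import all_boot all_order all_algebra.
From mathcomp Require Import all_classical all_reals all_analysis.
From mathcomp Require Import finmap.
Import Order.TTheory GRing.Theory Num.Theory.
Set Implicit Arguments. Unset Strict Implicit. Unset Printing Implicit Defensive.
Local Open Scope classical_set_scope.
Local Open Scope ring_scope.

(* The middle vector is constant, equal to a_n / #I_n, on each block I_n, so
   its l1-mass on a finite set s is  sum_n |a_n| #(s & I_n) / #I_n.  This mass
   is at least  lam * sum_(n in s[lam]) |a_n|  and at most
   sum_(n in s[+]) |a_n|, while its sup norm is at most sup_n |a_n|; taking
   suprema over s in F gives both inequalities. *)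

Lemma ncard_set0 (T : choiceType) : ncard (set0 : set T) = 0%N.
Proof. by rewrite /ncard fset_set0 cardfs0. Qed.

Lemma ncard_le (T : choiceType) (A B : set T) :
  finite_set B -> A `<=` B -> (ncard A <= ncard B)%N.
Proof.
move=> finB AB; have finA : finite_set A by exact: sub_finite_set finB.
by apply: fsubset_leq_card; rewrite -fset_set_sub.
Qed.

Lemma ncard_gt0 (T : choiceType) (A : set T) :
  finite_set A -> A !=set0 -> (0 < ncard A)%N.
Proof.
move=> finA [x Ax]; rewrite /ncard cardfs_gt0; apply/eqP => A0.
have : x \in fset_set A by rewrite in_fset_set // mem_set.
by rewrite A0.
Qed.

Lemma sum_fset_set_indic (R : pzRingType) (T : choiceType) (S A : set T) :
  finite_set S ->
  \sum_(j <- fset_set S) (\1_A j : R) = (ncard (S `&` A))%:R.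
Proof.
move=> finS; rewrite -fsbig_finite //.
transitivity (\sum_(j \in S) (if j \in A then 1 else 0 : R)).
  by apply: eq_fsbigr => j _; rewrite indicE; case: (j \in A).
rewrite -fsbig_mkcondr fsbig_finite; last exact: finite_setIl.
by rewrite /ncard -sum1_size natr_sum.
Qed.

Lemma fsbig_supported_ord (R : nmodType) (f : nat -> R) (N : nat) (X : set nat) :
  (forall n, (N <= n)%N -> f n = 0) ->
  \sum_(n \in X) f n = \sum_(n < N) (if (n : nat) \in X then f n else 0).
Proof.
move=> f_supp; rewrite -(fsbig_widen (X `&` `I_N) X); last 2 first.
- exact: subIsetl.
- move=> n [Xn /not_andP[//|nN]]; rewrite /preimage /= f_supp //.
  by rewrite leqNgt; apply/negP.
by rewrite fsbig_mkcondl -fsbig_ord.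
Qed.

Definition sup_norm (R : realType) (J : Type) (x : J -> R) : \bar R :=
  ereal_sup (range (fun j => (`|x j|)%:E)).

Definition sup_fsum_norm (R : realType) (J : choiceType) (H : set (set J))
    (x : J -> R) : \bar R :=
  ereal_sup [set (\sum_(j \in s) `|x j|)%:E | s in H].

Lemma fam_normE (R : realType) (J : choiceType) (H : set (set J)) (x : J -> R) :
  fam_norm H x = maxe (sup_norm x) (sup_fsum_norm H x).
Proof. by []. Qed.

Lemma sup_norm_ge0 (R : realType) (J : Type) (x : J -> R) (j : J) :
  (0 <= sup_norm x)%E.
Proof.
apply: (@le_trans _ _ (`|x j|)%:E); first by rewrite lee_fin.
by apply: ereal_sup_ubound; exists j.
Qed.

Section BlockMean.
Variables (R : realType) (I : choiceType) (Ip : nat -> set I).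
Variables (N : nat) (a : nat -> R).

Definition block_mean (j : I) : R :=
  \sum_(n < N) a n * ((ncard (Ip n))%:R)^-1 * \1_(Ip n) j.

Hypothesis partIp : finite_partition Ip.
Hypothesis a_supp : forall n, (N <= n)%N -> a n = 0.

Let Ip_finite n : finite_set (Ip n).
Proof. by case: partIp. Qed.

Let ncard_Ip_gt0 n : 0 < (ncard (Ip n))%:R :> R.
Proof. by case: partIp => fin ne _ _; rewrite ltr0n ncard_gt0. Qed.

Let Ip_inj j m n : Ip m j -> Ip n j -> m = n.
Proof. by case: partIp => _ _ triv _ jm jn; apply: triv => //; exists j. Qed.

Let Ip_cover j : exists m, Ip m j.
Proof.
case: partIp => _ _ _ cover; have [m _ jm] : (\bigcup_n Ip n) j by rewrite cover.
by exists m.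
Qed.

Let norm_a_supp n : (N <= n)%N -> `|a n| = 0.
Proof. by move/a_supp ->; rewrite normr0. Qed.

Lemma sum_indic_block (f : nat -> R) m j :
  (forall n, (N <= n)%N -> f n = 0) -> Ip m j ->
  \sum_(n < N) f n * \1_(Ip n) j = f m.
Proof.
move=> f_supp jm; have indic_other (n : nat) : n != m -> \1_(Ip n) j = 0 :> R.
  move=> nm; rewrite indicE memNset // => jn.
  by move: nm; rewrite (Ip_inj jn jm) eqxx.
case: (ltnP m N) => [mN|Nm].
  rewrite (bigD1 (Ordinal mN)) //= indicE mem_set // mulr1 big1 ?addr0 // => n nm.
  by rewrite indic_other ?mulr0 //; apply: contraNneq nm => nm; apply/eqP/val_inj.
rewrite f_supp // big1 // => n _; rewrite indic_other ?mulr0 //.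
by apply: contraTneq (ltn_ord n) => ->; rewrite -leqNgt.
Qed.

Lemma block_mean_at m j : Ip m j -> block_mean j = a m / (ncard (Ip m))%:R.
Proof.
move=> jm; rewrite /block_mean.
rewrite (sum_indic_block (f := fun n => a n / (ncard (Ip n))%:R) _ jm) //.
by move=> n /a_supp ->; rewrite mul0r.
Qed.

Lemma norm_block_mean j :
  `|block_mean j| = \sum_(n < N) `|a n| * ((ncard (Ip n))%:R)^-1 * \1_(Ip n) j.
Proof.
have [m jm] := Ip_cover j.
rewrite (block_mean_at jm).
rewrite (sum_indic_block (f := fun n => `|a n| / (ncard (Ip n))%:R) _ jm).
  by rewrite normrM (ger0_norm (x := _^-1)) // invr_ge0 ltW.
by move=> n /norm_a_supp ->; rewrite mul0r.
Qed.

Lemma fsum_norm_block_mean (s : set I) :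
  \sum_(j \in s) `|block_mean j| =
  \sum_(n < N) `|a n| * ((ncard (Ip n))%:R)^-1 * (ncard (s `&` Ip n))%:R.
Proof.
under eq_fsbigr => j _ do rewrite norm_block_mean.
pose U := \bigcup_(n in `I_N) Ip n.
have finU : finite_set U by apply: bigcup_finite => //; exact: finite_II.
rewrite -(fsbig_widen (s `&` U) s); last 2 first.
- exact: subIsetl.
- move=> j [sj /not_andP[//|nU]]; rewrite /preimage /=.
  apply: big1 => n _; rewrite indicE memNset ?mulr0 // => jn.
  by apply: nU; exists n => //=.
rewrite fsbig_finite; last exact: finite_setIr.
rewrite exchange_big /=; apply: eq_bigr => n _.
rewrite -mulr_sumr sum_fset_set_indic; last exact: finite_setIr.
congr (_ * (ncard _)%:R); apply/seteqP; split => j /=; first by case=> [[]].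
by case=> sj jn; split => //; split => //; exists n => //=.
Qed.

Lemma lambda_fsum_le_block_mean (lam : R) (s : set I) :
  lam * \sum_(n \in s_lambda Ip lam s) `|a n| <= \sum_(j \in s) `|block_mean j|.
Proof.
rewrite fsum_norm_block_mean (fsbig_supported_ord _ norm_a_supp) mulr_sumr.
apply: ler_sum => n _; case: ifP => [/set_mem sn|_].
  by rewrite mulrC -mulrA ler_wpM2l // ler_pdivlMl // mulrC.
by rewrite mulr0 !mulr_ge0 // invr_ge0 ltW.
Qed.

Lemma fsum_norm_block_mean_le_plus (s : set I) :
  \sum_(j \in s) `|block_mean j| <= \sum_(n \in s_plus Ip s) `|a n|.
Proof.
rewrite fsum_norm_block_mean (fsbig_supported_ord _ norm_a_supp).
apply: ler_sum => n _; case: ifP => [_|sn].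
  rewrite -mulrA ler_piMr // ler_pdivrMl // mulr1 ler_nat.
  by apply: ncard_le => //; exact: subIsetr.
have -> : s `&` Ip n = set0.
  by apply/eqP; apply: contraFT sn => /set0P sn; exact: mem_set.
by rewrite ncard_set0 mulr0.
Qed.

Lemma sup_norm_block_mean_le : (sup_norm block_mean <= sup_norm a)%E.
Proof.
apply: ge_ereal_sup => _ [j _ <-]; have [m jm] := Ip_cover j.
apply: le_ereal_sup_tmp; exists (`|a m|)%:E; first by exists m.
rewrite lee_fin (block_mean_at jm) normrM (ger0_norm (x := _^-1)); last first.
  by rewrite invr_ge0 ltW.
by rewrite ler_piMr // invf_le1 // ler1n -(ltr0n R).
Qed.

Lemma lambda_sup_fsum_le_block_mean (F : set (set I)) (lam : R) : 0 < lam ->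
  (lam%:E * sup_fsum_norm (G_lambda Ip lam F) a <= sup_fsum_norm F block_mean)%E.
Proof.
move=> lam_gt0; rewrite -ereal_sup_pZl //.
apply: ge_ereal_sup => _ [_ [_ [s Fs <-] <-] <-].
apply: le_ereal_sup_tmp; exists (\sum_(j \in s) `|block_mean j|)%:E.
  by exists s.
by rewrite lee_fin lambda_fsum_le_block_mean.
Qed.

Lemma sup_fsum_block_mean_le_plus (F : set (set I)) :
  (sup_fsum_norm F block_mean <= sup_fsum_norm (G_plus Ip F) a)%E.
Proof.
apply: ge_ereal_sup => _ [s Fs <-]; apply: le_ereal_sup_tmp.
exists (\sum_(n \in s_plus Ip s) `|a n|)%:E.
  by exists (s_plus Ip s) => //; exists s.
by rewrite lee_fin fsum_norm_block_mean_le_plus.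
Qed.

End BlockMean.

Theorem proposition4p3 (R : realType) (I : choiceType) (Ip : nat -> set I)
    (F : set (set I)) :
  finite_partition Ip -> T_family R Ip F ->
  forall (lam : R), 0 < lam < 1 ->
  forall (a : nat -> R) (N : nat), (forall n, (N <= n)%N -> a n = 0) ->
  let mid : I -> R := fun j =>
    \sum_(n < N) a n * ((ncard (Ip n))%:R)^-1 * \1_(Ip n) j in
  ((lam%:E * fam_norm (G_lambda Ip lam F) a
      <= maxe (fam_norm F mid) (ereal_sup (range (fun n => (`|a n|)%:E))))
   /\ (maxe (fam_norm F mid) (ereal_sup (range (fun n => (`|a n|)%:E)))
      <= fam_norm (G_plus Ip F) a))%E.
Proof.
move=> partIp _ lam /andP[lam_gt0 lam_lt1] a N a_supp mid.
rewrite -[mid]/(block_mean Ip N a) -/(sup_norm a) !fam_normE.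
have a_sup_ge0 := sup_norm_ge0 a 0.
have lam_le1 : (lam%:E <= 1)%E by rewrite lee_fin ltW.
split.
- rewrite maxe_pMr ?lee_fin ?(ltW lam_gt0) // ge_max !le_max gee_pMl //.
  by rewrite (lambda_sup_fsum_le_block_mean partIp a_supp F lam_gt0) !orbT.
- rewrite !ge_max !le_max lexx (sup_norm_block_mean_le partIp a_supp).
  by rewrite (sup_fsum_block_mean_le_plus partIp a_supp F) !orbT.
Qed.
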